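(* Let $p>1$ and consider, for $A\in\mathbb R^{m\times N}$, $y\in\mathbb R^m$, $\eta>0$, the problem $\min_{x\in\mathbb R^N}\|Ax-y\|_2$ subject to $\|x\|_p\le\eta$. (i) If $A$ has full row rank and $0<\eta<\min_{Ax=y}\|x\|_p$, then this problem has a unique optimal solution $x^*$, and there is a unique Lagrange multiplier $\mu$ satisfying the KKT conditions $A^T(Ax^*-y)+\mu\nabla f(x^* )=0$, $0\le\mu\perp f(x^* )-\eta^p\le0$ (with $f(x)=\|x\|_p^p$); moreover $\mu>0$ and $\|x^*\|_p=\eta$. (ii) If every $m\times m$ submatrix of $A$ is invertible (with $N\ge m$), $y\ne0$, and $0<\eta<\min_{Ax=y}\|x\|_p$, then the unique optimal solution satisfies $|\mathrm{supp}(x^* )|\ge N-m+1$.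
   Context: $\|x\|_p:=(\sum_i|x_i|^p)^{1/p}$; $\mathrm{supp}(x)=\{i:x_i\ne0\}$. $a\perp b$ for scalars means $ab=0$. *)

From Stdlib Require Import Reals Lra Lia List.
Open Scope R_scope.

(* Vectors in R^n are functions nat -> R, only indices < n matter.
   Matrices in R^{m x N} are functions nat -> nat -> R (row, column). *)

Fixpoint rsum (n : nat) (f : nat -> R) : R :=
  match n with
  | O => 0
  | S k => rsum k f + f k
  end.

(* |t|^a for real exponent a > 0, with the convention 0^a = 0 *)
Definition abspow (t a : R) : R :=
  if Req_dec_T t 0 then 0 else Rpower (Rabs t) a.

Definition pnorm (p : R) (N : nat) (x : nat -> R) : R :=
  abspow (rsum N (fun i => abspow (x i) p)) (1 / p).

Definition fpow (p : R) (N : nat) (x : nat -> R) : R :=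
  rsum N (fun i => abspow (x i) p).

Definition sgn (t : R) : R :=
  if Rlt_dec 0 t then 1 else if Rlt_dec t 0 then -1 else 0.
Definition grad_fpow (p : R) (x : nat -> R) (i : nat) : R :=
  p * sgn (x i) * abspow (x i) (p - 1).

Definition matvec (N : nat) (A : nat -> nat -> R) (x : nat -> R) : nat -> R :=
  fun i => rsum N (fun j => A i j * x j).

Definition tmatvec (m : nat) (A : nat -> nat -> R) (v : nat -> R) : nat -> R :=
  fun j => rsum m (fun i => A i j * v i).

Definition norm2 (m : nat) (v : nat -> R) : R :=
  sqrt (rsum m (fun i => v i * v i)).

Definition resid (m N : nat) (A : nat -> nat -> R) (y x : nat -> R) : nat -> R :=
  fun i => matvec N A x i - y i.

Definition solves (m N : nat) (A : nat -> nat -> R) (y x : nat -> R) : Prop :=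
  forall i, (i < m)%nat -> matvec N A x i = y i.

Definition optimal (p : R) (m N : nat) (A : nat -> nat -> R) (y : nat -> R)
    (eta : R) (x : nat -> R) : Prop :=
  pnorm p N x <= eta /\
  forall z : nat -> R, pnorm p N z <= eta ->
    norm2 m (resid m N A y x) <= norm2 m (resid m N A y z).

Definition full_row_rank (m N : nat) (A : nat -> nat -> R) : Prop :=
  forall c : nat -> R,
    (forall j, (j < N)%nat -> tmatvec m A c j = 0) ->
    forall i, (i < m)%nat -> c i = 0.

Definition invertible (n : nat) (M : nat -> nat -> R) : Prop :=
  exists B : nat -> nat -> R,
    (forall i j, (i < n)%nat -> (j < n)%nat ->
       rsum n (fun k => M i k * B k j) = if Nat.eqb i j then 1 else 0) /\
    (forall i j, (i < n)%nat -> (j < n)%nat ->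
       rsum n (fun k => B i k * M k j) = if Nat.eqb i j then 1 else 0).

(* every m x m submatrix (choice of m distinct columns, in increasing order) is invertible *)
Definition all_square_submatrices_invertible (m N : nat) (A : nat -> nat -> R) : Prop :=
  forall s : nat -> nat,
    (forall k l, (k < l)%nat -> (l < m)%nat -> (s k < s l)%nat) ->
    (forall k, (k < m)%nat -> (s k < N)%nat) ->
    invertible m (fun i k => A i (s k)).

(* eta is strictly less than min_{Ax=y} ||x||_p (the minimum exists) *)
Definition below_min_norm (p : R) (m N : nat) (A : nat -> nat -> R) (y : nat -> R)
    (eta : R) : Prop :=
  exists x0 : nat -> R, solves m N A y x0 /\
    (forall x, solves m N A y x -> pnorm p N x0 <= pnorm p N x) /\
    eta < pnorm p N x0.

Definition kkt (p : R) (m N : nat) (A : nat -> nat -> R) (y : nat -> R)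
    (eta : R) (x : nat -> R) (mu : R) : Prop :=
  (forall j, (j < N)%nat ->
     tmatvec m A (resid m N A y x) j + mu * grad_fpow p x j = 0) /\
  0 <= mu /\ fpow p N x - Rpower eta p <= 0 /\
  mu * (fpow p N x - Rpower eta p) = 0.

Definition supp_card (N : nat) (x : nat -> R) : nat :=
  length (filter (fun i => if Req_dec_T (x i) 0 then false else true) (seq 0 N)).

(* A minimizer exists by compactness of the p-ball. Since eta is below the minimal norm of
   a solution of Ax = y, the residual r = Ax* - y never vanishes at a minimizer, so under full
   row rank A^T r <> 0; hence the constraint is active (otherwise -A^T r is a feasible descent
   direction) and, as every direction decreasing f is then feasible, a one-constraint Farkas
   argument yields A^T r + mu grad f = 0 at x* with mu > 0. Strict convexity of |t|^p gives
   uniqueness: the midpoint of two minimizers would be a minimizer strictly inside the ball.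
   For (ii), at a zero coordinate grad f vanishes, so (A^T r)_j = 0 there; m such columns
   form an invertible submatrix and would force r = 0. *)

From Stdlib Require Import Reals List Lra Lia Classical ClassicalEpsilon.
Open Scope R_scope.

Lemma rsum_ext n f g :
  (forall i, (i < n)%nat -> f i = g i) -> rsum n f = rsum n g.
Proof.
  induction n as [|n IH]; intros Hfg; simpl; [reflexivity|].
  rewrite IH by (intros; apply Hfg; lia). rewrite Hfg by lia. reflexivity.
Qed.

Lemma rsum_0 n : rsum n (fun _ => 0) = 0.
Proof. induction n as [|n IH]; simpl; [|rewrite IH]; ring. Qed.

Lemma rsum_add n f g : rsum n (fun i => f i + g i) = rsum n f + rsum n g.
Proof. induction n as [|n IH]; simpl; [|rewrite IH]; ring. Qed.

Lemma rsum_scal n a f : rsum n (fun i => a * f i) = a * rsum n f.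
Proof. induction n as [|n IH]; simpl; [|rewrite IH]; ring. Qed.

Lemma rsum_lin n a b f g :
  rsum n (fun i => a * f i + b * g i) = a * rsum n f + b * rsum n g.
Proof. rewrite rsum_add, !rsum_scal. reflexivity. Qed.

Lemma rsum_exchange m n F :
  rsum m (fun i => rsum n (F i)) = rsum n (fun j => rsum m (fun i => F i j)).
Proof.
  induction m as [|m IH]; simpl.
  - symmetry. apply rsum_0.
  - rewrite IH, <- rsum_add. reflexivity.
Qed.

Lemma rsum_le n f g :
  (forall i, (i < n)%nat -> f i <= g i) -> rsum n f <= rsum n g.
Proof.
  induction n as [|n IH]; intros Hfg; simpl; [lra|].
  assert (rsum n f <= rsum n g) by (apply IH; intros; apply Hfg; lia).
  specialize (Hfg n (Nat.lt_succ_diag_r n)). lra.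
Qed.

Lemma rsum_lt n f g :
  (forall i, (i < n)%nat -> f i <= g i) ->
  (exists j, (j < n)%nat /\ f j < g j) -> rsum n f < rsum n g.
Proof.
  induction n as [|n IH]; intros Hfg [j [Hj Hlt]]; simpl; [lia|].
  assert (Hn := Hfg n (Nat.lt_succ_diag_r n)).
  destruct (Nat.eq_dec j n) as [->|Hjn].
  - assert (rsum n f <= rsum n g) by (apply rsum_le; intros; apply Hfg; lia). lra.
  - assert (rsum n f < rsum n g).
    { apply IH; [intros; apply Hfg; lia | exists j; split; [lia | exact Hlt]]. }
    lra.
Qed.

Lemma rsum_ge0 n f : (forall i, (i < n)%nat -> 0 <= f i) -> 0 <= rsum n f.
Proof. intros Hf. rewrite <- (rsum_0 n). apply rsum_le. exact Hf. Qed.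

Lemma rsum_term_le n f j :
  (forall i, (i < n)%nat -> 0 <= f i) -> (j < n)%nat -> f j <= rsum n f.
Proof.
  induction n as [|n IH]; intros Hf Hj; simpl; [lia|].
  assert (0 <= rsum n f) by (apply rsum_ge0; intros; apply Hf; lia).
  assert (Hn := Hf n (Nat.lt_succ_diag_r n)).
  destruct (Nat.eq_dec j n) as [->|Hjn]; [lra|].
  assert (f j <= rsum n f) by (apply IH; [intros; apply Hf|]; lia). lra.
Qed.

Lemma rsum_kronecker n c j :
  (j < n)%nat -> rsum n (fun i => c i * (if Nat.eqb i j then 1 else 0)) = c j.
Proof.
  induction n as [|n IH]; intros Hj; simpl; [lia|].
  destruct (Nat.eqb_spec n j) as [->|Hnj].
  - rewrite (rsum_ext j _ (fun _ => 0)), rsum_0; [ring|].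
    intros i Hi. destruct (Nat.eqb_spec i j); [lia | ring].
  - rewrite IH by lia. ring.
Qed.

Definition dot (n : nat) (u v : nat -> R) : R := rsum n (fun i => u i * v i).

Lemma dot_linr n u a v b w :
  dot n u (fun i => a * v i + b * w i) = a * dot n u v + b * dot n u w.
Proof.
  unfold dot. rewrite <- rsum_lin. apply rsum_ext. intros; ring.
Qed.

Lemma dot_comm n u v : dot n u v = dot n v u.
Proof. apply rsum_ext. intros; ring. Qed.

Lemma dot_self_ge0 n u : 0 <= dot n u u.
Proof. apply rsum_ge0. intros; nra. Qed.

Lemma dot_self_le0 n u : dot n u u <= 0 -> forall i, (i < n)%nat -> u i = 0.
Proof.
  intros Hu i Hi. apply NNPP. intros Hui.
  assert (0 < dot n u u).
  { unfold dot. rewrite <- (rsum_0 n). apply rsum_lt; [intros; nra|].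
    exists i. split; [exact Hi|]. assert (0 < u i * u i) by (apply Rsqr_pos_lt; exact Hui). lra. }
  lra.
Qed.

Lemma dot_tmatvec m N A r d :
  dot m r (matvec N A d) = dot N (tmatvec m A r) d.
Proof.
  unfold dot, matvec, tmatvec.
  rewrite (rsum_ext m _ (fun i => rsum N (fun j => r i * (A i j * d j))))
    by (intros; rewrite <- rsum_scal; reflexivity).
  rewrite rsum_exchange. apply rsum_ext. intros j _.
  rewrite Rmult_comm, <- rsum_scal. apply rsum_ext. intros; ring.
Qed.

(* Farkas' lemma for a single inequality. *)
Lemma dot_descent_cone n c g :
  0 < dot n g g ->
  (forall d, dot n g d < 0 -> 0 <= dot n c d) ->
  exists lam, 0 <= lam /\ forall j, (j < n)%nat -> c j + lam * g j = 0.
Proof.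
  intros Hg Hcone.
  set (al := dot n c g / dot n g g).
  set (w := fun j => 1 * c j + (- al) * g j).
  assert (Hgw : dot n g w = 0).
  { unfold w. rewrite dot_linr, (dot_comm n g c). unfold al. field. lra. }
  assert (Hcw : dot n c w = dot n w w).
  { replace (dot n w w) with (dot n w (fun j => 1 * c j + (- al) * g j)) by reflexivity.
    rewrite dot_linr, (dot_comm n w g), Hgw, dot_comm. ring. }
  (* Along d = -g - t w the constraint decreases for every t, so c . w <= 0. *)
  assert (Hline : forall t, 0 <= - dot n c g - t * dot n w w).
  { intros t. rewrite <- Hcw.
    assert (H := Hcone (fun j => (-1) * g j + (- t) * w j)).
    rewrite !dot_linr, Hgw in H. lra. }
  assert (Hw : forall j, (j < n)%nat -> w j = 0).
  { apply dot_self_le0. apply Rnot_lt_le. intros Hpos.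
    specialize (Hline ((1 - dot n c g) / dot n w w)).
    field_simplify in Hline; lra. }
  assert (Hal : al <= 0).
  { specialize (Hline 0). unfold al, Rdiv.
    assert (0 < / dot n g g) by (apply Rinv_0_lt_compat; lra). nra. }
  exists (- al). split; [lra|]. intros j Hj. specialize (Hw j Hj). unfold w in Hw. lra.
Qed.

Lemma abspow_0 a : abspow 0 a = 0.
Proof. unfold abspow. destruct (Req_dec_T 0 0); congruence. Qed.

Lemma abspow_Rpower t a : t <> 0 -> abspow t a = Rpower (Rabs t) a.
Proof. unfold abspow. destruct (Req_dec_T t 0); congruence. Qed.

Lemma abspow_gt0 t a : t <> 0 -> 0 < abspow t a.
Proof. intros Ht. rewrite abspow_Rpower by exact Ht. apply exp_pos. Qed.

Lemma abspow_ge0 t a : 0 <= abspow t a.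
Proof.
  destruct (Req_dec t 0) as [->|Ht]; [rewrite abspow_0; lra|].
  left. apply abspow_gt0, Ht.
Qed.

Lemma abspow_opp t a : abspow (- t) a = abspow t a.
Proof.
  destruct (Req_dec t 0) as [->|Ht]; [now rewrite Ropp_0|].
  rewrite !abspow_Rpower, Rabs_Ropp by lra. reflexivity.
Qed.

Lemma abspow_lt_compat s t a : 0 < a -> 0 <= s < t -> abspow s a < abspow t a.
Proof.
  intros Ha [Hs Hst]. destruct (Req_dec s 0) as [->|Hs0].
  - rewrite abspow_0. apply abspow_gt0. lra.
  - rewrite !abspow_Rpower, !Rabs_right by lra. apply Rlt_Rpower_l; lra.
Qed.

Lemma sgn_pos t : 0 < t -> sgn t = 1.
Proof. unfold sgn. destruct (Rlt_dec 0 t); [reflexivity | lra]. Qed.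

Lemma sgn_neg t : t < 0 -> sgn t = -1.
Proof. unfold sgn. destruct (Rlt_dec 0 t); [lra|]. destruct (Rlt_dec t 0); [reflexivity | lra]. Qed.

Lemma sgn_0 : sgn 0 = 0.
Proof. unfold sgn. destruct (Rlt_dec 0 0); [lra|]. destruct (Rlt_dec 0 0); [lra | reflexivity]. Qed.

Definition dabspow (p t : R) : R := p * sgn t * abspow t (p - 1).

Lemma dabspow_neq0 p t : 0 < p -> t <> 0 -> dabspow p t <> 0.
Proof.
  intros Hp Ht. unfold dabspow. assert (0 < abspow t (p - 1)) by (apply abspow_gt0, Ht).
  destruct (Rlt_dec t 0) as [Hlt|Hge];
    [rewrite sgn_neg by exact Hlt | rewrite sgn_pos by lra]; nra.
Qed.

Lemma dabspow_increasing p s t : 1 < p -> s < t -> dabspow p s < dabspow p t.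
Proof.
  intros Hp Hst. unfold dabspow.
  assert (Hmono : forall u v, 0 <= u < v -> abspow u (p - 1) < abspow v (p - 1))
    by (intros; apply abspow_lt_compat; lra).
  destruct (Rtotal_order s 0) as [Hs|[->|Hs]].
  - rewrite sgn_neg by exact Hs.
    assert (0 < abspow s (p - 1)) by (apply abspow_gt0; lra).
    destruct (Rtotal_order t 0) as [Ht|[->|Ht]].
    + rewrite sgn_neg by exact Ht. rewrite <- (abspow_opp s), <- (abspow_opp t).
      assert (abspow (- t) (p - 1) < abspow (- s) (p - 1)) by (apply Hmono; lra). nra.
    + rewrite sgn_0. nra.
    + rewrite sgn_pos by exact Ht. assert (0 < abspow t (p - 1)) by (apply abspow_gt0; lra). nra.
  - rewrite sgn_0, sgn_pos by exact Hst. assert (0 < abspow t (p - 1)) by (apply abspow_gt0; lra). nra.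
  - rewrite !sgn_pos by lra. assert (abspow s (p - 1) < abspow t (p - 1)) by (apply Hmono; lra). nra.
Qed.

(* At 0 the difference quotient is |h|^(p-1) up to sign, which tends to 0 since p > 1. *)
Lemma derivable_pt_lim_abspow_0 p : 1 < p -> derivable_pt_lim (fun s => abspow s p) 0 0.
Proof.
  intros Hp eps Heps.
  exists (mkposreal (Rpower eps (/ (p - 1))) (exp_pos _)). intros h Hh Hhd. simpl in Hhd.
  rewrite Rplus_0_l, abspow_0, !Rminus_0_r, abspow_Rpower by exact Hh.
  assert (Habs : 0 < Rabs h) by (apply Rabs_pos_lt, Hh).
  replace (Rpower (Rabs h) p / h) with (Rpower (Rabs h) (p - 1) * (Rabs h / h)).
  2:{ replace p with ((p - 1) + 1) at 2 by ring.
      rewrite Rpower_plus, Rpower_1 by exact Habs. field. exact Hh. }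
  unfold Rdiv. rewrite !Rabs_mult, Rabs_Rabsolu, Rabs_inv, Rinv_r, Rmult_1_r by lra.
  rewrite Rabs_right by (left; apply exp_pos).
  replace eps with (Rpower (Rpower eps (/ (p - 1))) (p - 1)).
  - apply Rlt_Rpower_l; [lra | split; [exact Habs | exact Hhd]].
  - rewrite Rpower_mult, Rinv_l, Rpower_1 by lra. reflexivity.
Qed.

Lemma derivable_pt_lim_abspow p t : 1 < p ->
  derivable_pt_lim (fun s => abspow s p) t (dabspow p t).
Proof.
  intros Hp. unfold dabspow. destruct (Rtotal_order t 0) as [Ht|[->|Ht]].
  - rewrite sgn_neg, abspow_Rpower, Rabs_left by lra.
    apply (derivable_pt_lim_locally_ext (comp (fun u => Rpower u p) Ropp) _ t (t - 1) 0).
    + lra.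
    + intros z Hz. unfold comp. rewrite abspow_Rpower, Rabs_left by lra. reflexivity.
    + replace (p * -1 * Rpower (- t) (p - 1)) with ((p * Rpower (- t) (p - 1)) * -1) by ring.
      apply derivable_pt_lim_comp.
      * apply (derivable_pt_lim_opp id), derivable_pt_lim_id.
      * apply derivable_pt_lim_power. lra.
  - rewrite sgn_0, Rmult_0_r, Rmult_0_l. apply derivable_pt_lim_abspow_0, Hp.
  - rewrite sgn_pos, abspow_Rpower, Rabs_right, Rmult_1_r by lra.
    apply (derivable_pt_lim_locally_ext (fun u => Rpower u p) _ t 0 (t + 1)).
    + lra.
    + intros z Hz. rewrite abspow_Rpower, Rabs_right by lra. reflexivity.
    + apply derivable_pt_lim_power. exact Ht.
Qed.

(* Mean value theorem plus a strictly increasing derivative. *)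
Lemma abspow_tangent_lt p u v : 1 < p -> u <> v ->
  abspow u p + dabspow p u * (v - u) < abspow v p.
Proof.
  intros Hp Huv.
  assert (D : forall c, derivable_pt_lim (fun s => abspow s p) c (dabspow p c))
    by (intros; apply derivable_pt_lim_abspow, Hp).
  destruct (Rtotal_order u v) as [Hlt|[Heq|Hgt]]; [| congruence |].
  - destruct (MVT_cor2 (fun s => abspow s p) (dabspow p) u v Hlt) as [c [Hc Hcuv]];
      [intros; apply D|].
    assert (dabspow p u < dabspow p c) by (apply dabspow_increasing; lra). nra.
  - destruct (MVT_cor2 (fun s => abspow s p) (dabspow p) v u Hgt) as [c [Hc Hcuv]];
      [intros; apply D|].
    assert (dabspow p c < dabspow p u) by (apply dabspow_increasing; lra). nra.
Qed.

Lemma abspow_tangent_le p u v : 1 < p ->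
  abspow u p + dabspow p u * (v - u) <= abspow v p.
Proof.
  intros Hp. destruct (Req_dec u v) as [->|Huv]; [lra|].
  left. apply abspow_tangent_lt; assumption.
Qed.

Lemma abspow_midpoint_le p a b : 1 < p ->
  abspow ((a + b) / 2) p <= (abspow a p + abspow b p) / 2.
Proof.
  intros Hp. assert (Ha := abspow_tangent_le p ((a + b) / 2) a Hp).
  assert (Hb := abspow_tangent_le p ((a + b) / 2) b Hp). lra.
Qed.

Lemma abspow_midpoint_lt p a b : 1 < p -> a <> b ->
  abspow ((a + b) / 2) p < (abspow a p + abspow b p) / 2.
Proof.
  intros Hp Hab.
  assert (Ha := abspow_tangent_lt p ((a + b) / 2) a Hp ltac:(lra)).
  assert (Hb := abspow_tangent_lt p ((a + b) / 2) b Hp ltac:(lra)). lra.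
Qed.

Lemma fpow_ge0 p N x : 0 <= fpow p N x.
Proof. apply rsum_ge0. intros; apply abspow_ge0. Qed.

Lemma fpow_zero_vec p N : fpow p N (fun _ => 0) = 0.
Proof. unfold fpow. rewrite (rsum_ext _ _ (fun _ => 0)), rsum_0 by (intros; apply abspow_0). reflexivity. Qed.

Lemma fpow_gt0_support p N x : 0 < fpow p N x -> exists j, (j < N)%nat /\ x j <> 0.
Proof.
  intros Hx. apply NNPP. intros Hsupp.
  assert (fpow p N x = 0); [|lra].
  unfold fpow. rewrite <- (rsum_0 N). apply rsum_ext. intros j Hj.
  destruct (Req_dec (x j) 0) as [->|Hxj]; [apply abspow_0 | exfalso; eauto].
Qed.

Lemma fpow_midpoint_le p N x1 x2 : 1 < p ->
  fpow p N (fun j => (x1 j + x2 j) / 2) <= (fpow p N x1 + fpow p N x2) / 2.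
Proof.
  intros Hp. unfold fpow. replace (_ / 2) with
    (rsum N (fun j => / 2 * abspow (x1 j) p + / 2 * abspow (x2 j) p)) by (rewrite rsum_lin; field).
  apply rsum_le. intros j _. assert (H := abspow_midpoint_le p (x1 j) (x2 j) Hp). lra.
Qed.

Lemma fpow_midpoint_lt p N x1 x2 j : 1 < p -> (j < N)%nat -> x1 j <> x2 j ->
  fpow p N (fun j => (x1 j + x2 j) / 2) < (fpow p N x1 + fpow p N x2) / 2.
Proof.
  intros Hp Hj Hne. unfold fpow. replace (_ / 2) with
    (rsum N (fun j => / 2 * abspow (x1 j) p + / 2 * abspow (x2 j) p)) by (rewrite rsum_lin; field).
  apply rsum_lt.
  - intros i _. assert (H := abspow_midpoint_le p (x1 i) (x2 i) Hp). lra.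
  - exists j. split; [exact Hj|]. assert (H := abspow_midpoint_lt p (x1 j) (x2 j) Hp Hne). lra.
Qed.

Lemma Rpower_Rpower_inv x a : 0 < x -> a <> 0 -> Rpower (Rpower x a) (/ a) = x.
Proof. intros Hx Ha. rewrite Rpower_mult, Rinv_r by exact Ha. apply Rpower_1, Hx. Qed.

Lemma pnorm_le_iff p N x eta : 0 < p -> 0 < eta ->
  pnorm p N x <= eta <-> fpow p N x <= Rpower eta p.
Proof.
  intros Hp Heta. unfold pnorm. fold (fpow p N x). rewrite Rdiv_1_l.
  assert (Hf := fpow_ge0 p N x). assert (Hetap : 0 < Rpower eta p) by apply exp_pos.
  destruct (Req_dec (fpow p N x) 0) as [->|Hf0]; [rewrite abspow_0; lra|].
  rewrite abspow_Rpower, Rabs_right by lra.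
  assert (Hinv : 0 < / p) by (apply Rinv_0_lt_compat, Hp).
  split; intros H.
  - rewrite <- (Rpower_Rpower_inv (fpow p N x) (/ p)), Rinv_inv by lra.
    apply Rle_Rpower_l; [lra | split; [apply exp_pos | exact H]].
  - rewrite <- (Rpower_Rpower_inv eta p) by lra.
    apply Rle_Rpower_l; lra.
Qed.

Lemma pnorm_eq_of_fpow_eq p N x eta : 0 < p -> 0 < eta ->
  fpow p N x = Rpower eta p -> pnorm p N x = eta.
Proof.
  intros Hp Heta Hx. unfold pnorm. fold (fpow p N x). rewrite Hx, Rdiv_1_l.
  assert (0 < Rpower eta p) by apply exp_pos.
  rewrite abspow_Rpower, Rabs_right by lra. apply Rpower_Rpower_inv; lra.
Qed.

Lemma Rabs_le_of_fpow_le p N x eta j : 0 < p -> 0 < eta -> (j < N)%nat ->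
  fpow p N x <= Rpower eta p -> Rabs (x j) <= eta.
Proof.
  intros Hp Heta Hj Hx.
  assert (Hxj : abspow (x j) p <= Rpower eta p).
  { eapply Rle_trans; [|exact Hx].
    apply (rsum_term_le N (fun i => abspow (x i) p)); [intros; apply abspow_ge0 | exact Hj]. }
  destruct (Req_dec (x j) 0) as [->|Hxj0]; [rewrite Rabs_R0; lra|].
  rewrite abspow_Rpower in Hxj by exact Hxj0.
  apply Rnot_lt_le. intros Hlt.
  assert (Rpower eta p < Rpower (Rabs (x j)) p) by (apply Rlt_Rpower_l; lra). lra.
Qed.

Definition axpy (x : nat -> R) (s : R) (d : nat -> R) : nat -> R := fun j => x j + s * d j.

Definition grad_dot (p : R) (N : nat) (x d : nat -> R) : R :=
  rsum N (fun j => dabspow p (x j) * d j).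

Lemma fpow_axpy_0 p N x d : fpow p N (axpy x 0 d) = fpow p N x.
Proof. apply rsum_ext. intros; unfold axpy. rewrite Rmult_0_l, Rplus_0_r. reflexivity. Qed.

Lemma derivable_pt_lim_affine a b t : derivable_pt_lim (fun s => a + s * b) t b.
Proof.
  intros eps Heps. exists (mkposreal eps Heps). intros h Hh _.
  replace ((a + (t + h) * b - (a + t * b)) / h - b) with 0 by (field; exact Hh).
  rewrite Rabs_R0. exact Heps.
Qed.

Lemma derivable_pt_lim_fpow_axpy p N x d : 1 < p ->
  derivable_pt_lim (fun s => fpow p N (axpy x s d)) 0 (grad_dot p N x d).
Proof.
  intros Hp. induction N as [|N IH]; simpl.
  - apply derivable_pt_lim_const.
  - apply (derivable_pt_lim_plus _ (fun s => abspow (x N + s * d N) p)); [exact IH|].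
    apply (derivable_pt_lim_comp (fun s => x N + s * d N) (fun t => abspow t p)).
    + apply derivable_pt_lim_affine.
    + rewrite Rmult_0_l, Rplus_0_r. apply derivable_pt_lim_abspow, Hp.
Qed.

Lemma derivable_pt_lim_0_right_below phi l k :
  derivable_pt_lim phi 0 l -> l < k ->
  exists delta, 0 < delta /\ forall s, 0 < s < delta -> phi s < phi 0 + k * s.
Proof.
  intros Hphi Hlk. destruct (Hphi (k - l) ltac:(lra)) as [delta Hdelta].
  exists delta. split; [apply cond_pos|]. intros s [Hs Hsd].
  assert (Hq := Hdelta s ltac:(lra) ltac:(rewrite Rabs_right; lra)).
  rewrite Rplus_0_l in Hq. apply Rabs_def2 in Hq.
  assert (Hquot : (phi s - phi 0) / s < k) by lra.
  apply (Rmult_lt_compat_l s) in Hquot; [|exact Hs].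
  field_simplify in Hquot; lra.
Qed.

Lemma fpow_axpy_descent p N x d : 1 < p -> grad_dot p N x d < 0 ->
  exists delta, 0 < delta /\ forall s, 0 < s < delta -> fpow p N (axpy x s d) < fpow p N x.
Proof.
  intros Hp Hd.
  destruct (derivable_pt_lim_0_right_below _ _ 0 (derivable_pt_lim_fpow_axpy p N x d Hp) Hd)
    as [delta [Hdelta Hs]].
  exists delta. split; [exact Hdelta|]. intros s Hsd. specialize (Hs s Hsd).
  rewrite fpow_axpy_0 in Hs.
  lra.
Qed.

Lemma fpow_axpy_lt p N x d b : 1 < p -> fpow p N x < b ->
  exists delta, 0 < delta /\ forall s, 0 < s < delta -> fpow p N (axpy x s d) < b.
Proof.
  intros Hp Hb. set (k := Rabs (grad_dot p N x d) + 1).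
  destruct (derivable_pt_lim_0_right_below _ _ k (derivable_pt_lim_fpow_axpy p N x d Hp))
    as [delta [Hdelta Hs]]; [unfold k; assert (H := Rle_abs (grad_dot p N x d)); lra|].
  assert (Hk : 0 < k) by (unfold k; assert (H := Rabs_pos (grad_dot p N x d)); lra).
  exists (Rmin delta ((b - fpow p N x) / k)).
  split; [apply Rmin_pos; [exact Hdelta | apply Rdiv_lt_0_compat; lra]|].
  intros s [Hs0 Hsm]. assert (Hsd := Rlt_le_trans _ _ _ Hsm (Rmin_l _ _)).
  assert (Hsb := Rlt_le_trans _ _ _ Hsm (Rmin_r _ _)).
  specialize (Hs s (conj Hs0 Hsd)).
  rewrite fpow_axpy_0 in Hs.
  apply (Rmult_lt_compat_l k) in Hsb; [|exact Hk].
  field_simplify in Hsb; lra.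
Qed.

Definition sqres m N A y x : R := dot m (resid m N A y x) (resid m N A y x).

Lemma optimal_sqres_le p m N A y eta xs z : 0 < p -> 0 < eta ->
  optimal p m N A y eta xs -> fpow p N z <= Rpower eta p -> sqres m N A y xs <= sqres m N A y z.
Proof.
  intros Hp Heta [_ Hmin] Hz. apply sqrt_le_0; [apply dot_self_ge0 .. |].
  apply Hmin, pnorm_le_iff; assumption.
Qed.

Lemma optimal_intro p m N A y eta xs : 0 < p -> 0 < eta ->
  fpow p N xs <= Rpower eta p ->
  (forall z, fpow p N z <= Rpower eta p -> sqres m N A y xs <= sqres m N A y z) ->
  optimal p m N A y eta xs.
Proof.
  intros Hp Heta Hxs Hmin. split; [apply pnorm_le_iff; assumption|].
  intros z Hz. apply sqrt_le_1_alt, Hmin, pnorm_le_iff; assumption.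
Qed.

Lemma resid_axpy m N A y x s d i :
  resid m N A y (axpy x s d) i = resid m N A y x i + s * matvec N A d i.
Proof.
  unfold resid, matvec, axpy. rewrite <- rsum_scal.
  rewrite (rsum_ext N _ (fun j => A i j * x j + s * (A i j * d j))) by (intros; ring).
  rewrite rsum_add. ring.
Qed.

Lemma sqres_axpy m N A y x s d :
  sqres m N A y (axpy x s d) = sqres m N A y x
    + 2 * s * dot N (tmatvec m A (resid m N A y x)) d
    + s * s * dot m (matvec N A d) (matvec N A d).
Proof.
  rewrite <- dot_tmatvec. unfold sqres, dot.
  rewrite (rsum_ext m _ (fun i => resid m N A y x i * resid m N A y x i
      + (2 * s * (resid m N A y x i * matvec N A d i)
         + s * s * (matvec N A d i * matvec N A d i))))
    by (intros; rewrite resid_axpy; ring).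
  rewrite !rsum_add, !rsum_scal. ring.
Qed.

Lemma sqres_midpoint_le m N A y x1 x2 :
  sqres m N A y (fun j => (x1 j + x2 j) / 2) <= (sqres m N A y x1 + sqres m N A y x2) / 2.
Proof.
  unfold sqres, dot. replace (_ / 2) with (rsum m (fun i =>
      / 2 * (resid m N A y x1 i * resid m N A y x1 i)
      + / 2 * (resid m N A y x2 i * resid m N A y x2 i))) by (rewrite rsum_lin; field).
  apply rsum_le. intros i _.
  replace (resid m N A y (fun j => (x1 j + x2 j) / 2) i)
    with ((resid m N A y x1 i + resid m N A y x2 i) / 2).
  - assert (H := Rle_0_sqr (resid m N A y x1 i - resid m N A y x2 i)). unfold Rsqr in H. lra.
  - unfold resid, matvec.
    rewrite (rsum_ext N (fun j => A i j * ((x1 j + x2 j) / 2))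
      (fun j => / 2 * (A i j * x1 j) + / 2 * (A i j * x2 j))) by (intros; field).
    rewrite rsum_lin. field.
Qed.

Lemma ray_min_slope_ge0 a Q delta : 0 <= Q -> 0 < delta ->
  (forall s, 0 < s < delta -> 0 <= 2 * s * a + s * s * Q) -> 0 <= a.
Proof.
  intros HQ Hdelta Hray. apply Rnot_lt_le. intros Ha.
  set (s := Rmin (delta / 2) (- a / (Q + 1))).
  assert (Hs0 : 0 < s) by (apply Rmin_pos; [lra | apply Rdiv_lt_0_compat; lra]).
  assert (Hsdelta : s < delta) by (assert (H := Rmin_l (delta / 2) (- a / (Q + 1))); fold s in H; lra).
  assert (HsQ : s * (Q + 1) <= - a).
  { assert (H := Rmin_r (delta / 2) (- a / (Q + 1))). fold s in H.
    apply (Rmult_le_compat_r (Q + 1)) in H; [|lra]. field_simplify in H; lra. }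
  specialize (Hray s (conj Hs0 Hsdelta)). nra.
Qed.

Lemma optimal_first_order p m N A y eta xs d : 0 < p -> 0 < eta ->
  optimal p m N A y eta xs ->
  (exists delta, 0 < delta /\ forall s, 0 < s < delta -> fpow p N (axpy xs s d) <= Rpower eta p) ->
  0 <= dot N (tmatvec m A (resid m N A y xs)) d.
Proof.
  intros Hp Heta Hopt [delta [Hdelta Hfeas]].
  apply (ray_min_slope_ge0 _ (dot m (matvec N A d) (matvec N A d)) delta);
    [apply dot_self_ge0 | exact Hdelta |].
  intros s Hs. assert (H := optimal_sqres_le p m N A y eta xs _ Hp Heta Hopt (Hfeas s Hs)).
  rewrite sqres_axpy in H. lra.
Qed.

Lemma optimal_resid_neq0 p m N A y eta xs :
  optimal p m N A y eta xs -> below_min_norm p m N A y eta ->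
  exists i, (i < m)%nat /\ resid m N A y xs i <> 0.
Proof.
  intros [Hxs _] [x0 [_ [Hmin Heta]]]. apply NNPP. intros Hr.
  assert (Hsol : solves m N A y xs).
  { intros i Hi. apply NNPP. intros Hne. apply Hr. exists i. unfold resid. split; [exact Hi | lra]. }
  specialize (Hmin xs Hsol). lra.
Qed.

Lemma optimal_tmatvec_resid_neq0 p m N A y eta xs :
  full_row_rank m N A -> optimal p m N A y eta xs -> below_min_norm p m N A y eta ->
  ~ (forall j, (j < N)%nat -> tmatvec m A (resid m N A y xs) j = 0).
Proof.
  intros Hrank Hopt Hbelow Hc.
  destruct (optimal_resid_neq0 p m N A y eta xs Hopt Hbelow) as [i [Hi Hri]].
  exact (Hri (Hrank _ Hc i Hi)).
Qed.

Lemma Un_cv_dominated u v l :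
  (forall n, Rabs (u n - l) <= v n) -> Un_cv v 0 -> Un_cv u l.
Proof.
  intros Hdom Hv eps Heps. destruct (Hv eps Heps) as [N0 HN0].
  exists N0. intros n Hn. specialize (HN0 n Hn). unfold Rdist in *.
  rewrite Rminus_0_r in HN0. eapply Rle_lt_trans; [apply Hdom|].
  eapply Rle_lt_trans; [apply Rle_abs | exact HN0].
Qed.

Lemma Un_cv_inv_INR_S : Un_cv (fun n => / INR (S n)) 0.
Proof.
  apply (cv_infty_cv_0 (fun n => INR (S n))). intros M.
  destruct (INR_unbounded M) as [N0 HN0]. exists N0. intros n Hn.
  assert (INR N0 <= INR (S n)) by (apply le_INR; lia). lra.
Qed.

Lemma Un_cv_const c : Un_cv (fun _ => c) c.
Proof.
  intros eps Heps. exists O. intros n _. unfold Rdist. rewrite Rminus_diag, Rabs_R0. exact Heps.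
Qed.

Lemma rsum_cvg n (F : nat -> nat -> R) L :
  (forall j, (j < n)%nat -> Un_cv (fun k => F k j) (L j)) ->
  Un_cv (fun k => rsum n (F k)) (rsum n L).
Proof.
  induction n as [|n IH]; intros HF; simpl; [apply Un_cv_const|].
  apply CV_plus; [apply IH; intros; apply HF; lia | apply HF; lia].
Qed.

Lemma Un_cv_le u l b : Un_cv u l -> (forall n, u n <= b) -> l <= b.
Proof.
  intros Hu Hb. apply Rnot_lt_le. intros Hlt.
  destruct (Hu (l - b) ltac:(lra)) as [N0 HN0]. specialize (HN0 N0 (le_n _)).
  specialize (Hb N0). unfold Rdist in HN0. apply Rabs_def2 in HN0. lra.
Qed.

Section Subsequences.

Variable phi : nat -> nat.
Hypothesis phi_incr : forall n, (phi n < phi (S n))%nat.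

Lemma subseq_index_ge n : (n <= phi n)%nat.
Proof. induction n as [|n IH]; [lia|]. specialize (phi_incr n). lia. Qed.

Lemma subseq_index_lt n k : (n < k)%nat -> (phi n < phi k)%nat.
Proof. induction 1 as [|k _ IH]; [apply phi_incr|]. specialize (phi_incr k). lia. Qed.

Lemma Un_cv_subseq u l : Un_cv u l -> Un_cv (fun n => u (phi n)) l.
Proof.
  intros Hu eps Heps. destruct (Hu eps Heps) as [N0 HN0].
  exists N0. intros n Hn. apply HN0. assert (H := subseq_index_ge n). lia.
Qed.

End Subsequences.

Lemma ValAdh_subseq u l : ValAdh u l ->
  exists psi, (forall n, (psi n < psi (S n))%nat) /\ Un_cv (fun n => u (psi n)) l.
Proof.
  intros Hadh.
  assert (Hclose : forall Nk : nat * nat, exists n,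
            (fst Nk <= n)%nat /\ Rabs (u n - l) < / INR (S (snd Nk))).
  { intros [N0 k]. assert (Hk : 0 < / INR (S k)) by (apply Rinv_0_lt_compat, lt_0_INR; lia).
    destruct (Hadh (disc l (mkposreal _ Hk)) N0) as [n [Hn Hd]];
      [exists (mkposreal _ Hk); intros z Hz; exact Hz|].
    exists n. split; assumption. }
  destruct (choice _ Hclose) as [pick Hpick].
  set (psi := fix psi k := match k with
                           | O => pick (O, O)
                           | S k' => pick (S (psi k'), S k')
                           end).
  assert (Hpsi : forall k, Rabs (u (psi k) - l) < / INR (S k)) by (intros [|k]; apply Hpick).
  exists psi. split.
  - intros n. destruct (Hpick (S (psi n), S n)) as [H _]. simpl in H |- *. lia.
  - apply (Un_cv_dominated _ (fun n => / INR (S n))); [intros; left; apply Hpsi|].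
    apply Un_cv_inv_INR_S.
Qed.

(* Bolzano-Weierstrass in R^K, by extracting successively in each coordinate. *)
Lemma bounded_seq_cvg_subseq (X : nat -> nat -> R) M K :
  (forall n j, (j < K)%nat -> Rabs (X n j) <= M) ->
  exists phi, (forall n, (phi n < phi (S n))%nat) /\
    exists l, forall j, (j < K)%nat -> Un_cv (fun n => X (phi n) j) (l j).
Proof.
  induction K as [|K IH]; intros Hbd.
  - exists (fun n => n). split; [intros; lia|]. exists (fun _ => 0). intros; lia.
  - destruct IH as [phi [Hphi [l Hl]]]; [intros; apply Hbd; lia|].
    destruct (Bolzano_Weierstrass (fun n => X (phi n) K) (fun c => - M <= c <= M) (compact_P3 (- M) M))
      as [lK HlK]; 
      [ intros n; assert (Hn := Hbd (phi n) K (Nat.lt_succ_diag_r K));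
        assert (Hx := Rle_abs (X (phi n) K)); assert (Hx' := Rle_abs (- X (phi n) K));
        rewrite Rabs_Ropp in Hx'; lra |].
    destruct (ValAdh_subseq _ _ HlK) as [psi [Hpsi HpsiK]].
    exists (fun n => phi (psi n)). split.
    + intros n. apply (subseq_index_lt phi Hphi), Hpsi.
    + exists (fun j => if Nat.eqb j K then lK else l j). intros j Hj.
      destruct (Nat.eqb_spec j K) as [->|HjK]; [exact HpsiK|].
      apply (Un_cv_subseq psi Hpsi (fun n => X (phi n) j)), Hl. lia.
Qed.

Lemma minimizing_sequence (T : Type) (P : T -> Prop) (F : T -> R) b :
  (exists x, P x) -> (forall x, P x -> b <= F x) ->
  exists inf (X : nat -> T), (forall n, P (X n)) /\
    Un_cv (fun n => F (X n)) inf /\ (forall x, P x -> inf <= F x).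
Proof.
  intros [x0 Hx0] Hb.
  set (E := fun v => exists x, P x /\ v = - F x).
  destruct (completeness E) as [L [HLub HLleast]].
  - exists (- b). intros v [x [Hx ->]]. specialize (Hb x Hx). lra.
  - exists (- F x0), x0. split; [exact Hx0 | reflexivity].
  - assert (Hinf : forall x, P x -> - L <= F x).
    { intros x Hx. assert (HEx : E (- F x)) by (exists x; split; [exact Hx | reflexivity]).
      specialize (HLub _ HEx). lra. }
    assert (Hnear : forall n, exists x, P x /\ F x < - L + / INR (S n)).
    { intros n. assert (Hk : 0 < / INR (S n)) by (apply Rinv_0_lt_compat, lt_0_INR; lia).
      apply NNPP. intros Hnone.
      assert (Hub : is_upper_bound E (L - / INR (S n))); [|specialize (HLleast _ Hub); lra].
      intros v [x [Hx ->]]. apply Rnot_lt_le. intros Hlt. apply Hnone.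
      exists x. split; [exact Hx | lra]. }
    destruct (choice _ Hnear) as [X HX].
    exists (- L), X. split; [intros n; apply HX|]. split; [|exact Hinf].
    apply (Un_cv_dominated _ (fun n => / INR (S n))); [|apply Un_cv_inv_INR_S].
    intros n. destruct (HX n) as [Hs Hlt]. specialize (Hinf _ Hs).
    rewrite Rabs_right; lra.
Qed.

Lemma fpow_cvg p N X l : 1 < p ->
  (forall j, (j < N)%nat -> Un_cv (fun n => X n j) (l j)) ->
  Un_cv (fun n => fpow p N (X n)) (fpow p N l).
Proof.
  intros Hp Hl. apply (rsum_cvg N (fun n j => abspow (X n j) p)). intros j Hj.
  apply (continuity_seq (fun s => abspow s p)); [|apply Hl, Hj].
  apply derivable_continuous_pt. exists (dabspow p (l j)). apply derivable_pt_lim_abspow, Hp.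
Qed.

Lemma sqres_cvg m N A y X l :
  (forall j, (j < N)%nat -> Un_cv (fun n => X n j) (l j)) ->
  Un_cv (fun n => sqres m N A y (X n)) (sqres m N A y l).
Proof.
  intros Hl.
  assert (Hr : forall i, Un_cv (fun n => resid m N A y (X n) i) (resid m N A y l i)).
  { intros i. apply CV_minus; [|apply Un_cv_const].
    apply (rsum_cvg N (fun n j => A i j * X n j)). intros j Hj.
    apply CV_mult; [apply Un_cv_const | apply Hl, Hj]. }
  apply (rsum_cvg m (fun n i => resid m N A y (X n) i * resid m N A y (X n) i)).
  intros i _. apply CV_mult; apply Hr.
Qed.

Lemma optimal_exists p m N A y eta : 1 < p -> 0 < eta ->
  exists xs, optimal p m N A y eta xs.
Proof.
  intros Hp Heta. assert (Hp0 : 0 < p) by lra.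
  set (feasible := fun x => fpow p N x <= Rpower eta p).
  destruct (minimizing_sequence _ feasible (sqres m N A y) 0) as [inf [X [HXfeas [HXcvg Hinf]]]].
  - exists (fun _ => 0). unfold feasible. rewrite fpow_zero_vec. left. apply exp_pos.
  - intros x _. apply dot_self_ge0.
  - destruct (bounded_seq_cvg_subseq X eta N) as [phi [Hphi [l Hl]]].
    { intros n j Hj. apply (Rabs_le_of_fpow_le p N); [exact Hp0 | exact Heta | exact Hj | apply HXfeas]. }
    assert (Hlfeas : feasible l).
    { apply (Un_cv_le (fun n => fpow p N (X (phi n)))); [apply fpow_cvg; assumption|].
      intros n. apply HXfeas. }
    assert (Hlinf : sqres m N A y l = inf).
    { apply (UL_sequence (fun n => sqres m N A y (X (phi n)))); [apply sqres_cvg, Hl|].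
      apply (Un_cv_subseq phi Hphi (fun n => sqres m N A y (X n))), HXcvg. }
    exists l. apply optimal_intro; [exact Hp0 | exact Heta | exact Hlfeas |].
    intros z Hz. rewrite Hlinf. apply Hinf, Hz.
Qed.

Lemma optimal_on_boundary p m N A y eta xs : 1 < p -> 0 < eta ->
  full_row_rank m N A -> below_min_norm p m N A y eta -> optimal p m N A y eta xs ->
  fpow p N xs = Rpower eta p.
Proof.
  intros Hp Heta Hrank Hbelow Hopt. assert (Hp0 : 0 < p) by lra.
  set (c := tmatvec m A (resid m N A y xs)).
  destruct (proj1 (pnorm_le_iff p N xs eta Hp0 Heta) (proj1 Hopt)) as [Hlt|]; [|assumption].
  assert (Hdesc : 0 <= dot N c (fun j => (-1) * c j + 0 * c j)).
  { apply (optimal_first_order p m N A y eta xs _ Hp0 Heta Hopt).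
    destruct (fpow_axpy_lt p N xs (fun j => (-1) * c j + 0 * c j) _ Hp Hlt) as [delta [Hdelta Hs]].
    exists delta. split; [exact Hdelta|]. intros s Hsd. left. apply Hs, Hsd. }
  rewrite dot_linr in Hdesc.
  exfalso. apply (optimal_tmatvec_resid_neq0 p m N A y eta xs Hrank Hopt Hbelow).
  apply dot_self_le0. fold c. lra.
Qed.

Lemma optimal_kkt_multiplier p m N A y eta xs : 1 < p -> 0 < eta ->
  full_row_rank m N A -> below_min_norm p m N A y eta -> optimal p m N A y eta xs ->
  exists mu, 0 < mu /\ forall j, (j < N)%nat ->
    tmatvec m A (resid m N A y xs) j + mu * grad_fpow p xs j = 0.
Proof.
  intros Hp Heta Hrank Hbelow Hopt. assert (Hp0 : 0 < p) by lra.
  assert (Hbd := optimal_on_boundary p m N A y eta xs Hp Heta Hrank Hbelow Hopt).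
  set (c := tmatvec m A (resid m N A y xs)).
  set (g := grad_fpow p xs).
  assert (Hg : 0 < dot N g g).
  { destruct (fpow_gt0_support p N xs) as [j [Hj Hxj]]; [rewrite Hbd; apply exp_pos|].
    unfold dot. rewrite <- (rsum_0 N). apply rsum_lt; [intros; nra|].
    exists j. split; [exact Hj|].
    assert (g j <> 0) by (apply dabspow_neq0; lra).
    assert (0 < g j * g j) by (apply Rsqr_pos_lt; assumption). lra. }
  destruct (dot_descent_cone N c g Hg) as [lam [Hlam Hkkt]].
  - intros d Hd. apply (optimal_first_order p m N A y eta xs d Hp0 Heta Hopt).
    destruct (fpow_axpy_descent p N xs d Hp Hd) as [delta [Hdelta Hs]].
    exists delta. split; [exact Hdelta|]. intros s Hsd. rewrite <- Hbd. left. apply Hs, Hsd.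
  - exists lam. split; [|exact Hkkt].
    destruct Hlam as [|<-]; [assumption|]. exfalso.
    apply (optimal_tmatvec_resid_neq0 p m N A y eta xs Hrank Hopt Hbelow).
    intros j Hj. specialize (Hkkt j Hj). fold c. lra.
Qed.

Lemma kkt_multiplier_unique p m N A y eta xs mu mu' : 0 < p ->
  (exists j, (j < N)%nat /\ xs j <> 0) ->
  kkt p m N A y eta xs mu -> kkt p m N A y eta xs mu' -> mu = mu'.
Proof.
  intros Hp [j [Hj Hxj]] [Hmu _] [Hmu' _].
  specialize (Hmu j Hj). specialize (Hmu' j Hj).
  apply (Rmult_eq_reg_r (grad_fpow p xs j)); [lra|]. apply dabspow_neq0; assumption.
Qed.

Lemma optimal_unique p m N A y eta x1 x2 : 1 < p -> 0 < eta ->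
  full_row_rank m N A -> below_min_norm p m N A y eta ->
  optimal p m N A y eta x1 -> optimal p m N A y eta x2 ->
  forall j, (j < N)%nat -> x1 j = x2 j.
Proof.
  intros Hp Heta Hrank Hbelow Hopt1 Hopt2 j Hj. apply NNPP. intros Hne.
  assert (Hp0 : 0 < p) by lra.
  set (xm := fun j => (x1 j + x2 j) / 2).
  assert (Hf1 := proj1 (pnorm_le_iff p N x1 eta Hp0 Heta) (proj1 Hopt1)).
  assert (Hf2 := proj1 (pnorm_le_iff p N x2 eta Hp0 Heta) (proj1 Hopt2)).
  assert (Hfm := fpow_midpoint_le p N x1 x2 Hp).
  assert (Hoptm : optimal p m N A y eta xm).
  { apply optimal_intro; [exact Hp0 | exact Heta | fold xm in Hfm; lra |].
    intros z Hz.
    assert (H1 := optimal_sqres_le p m N A y eta x1 z Hp0 Heta Hopt1 Hz).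
    assert (H2 := optimal_sqres_le p m N A y eta x2 z Hp0 Heta Hopt2 Hz).
    assert (Hsm := sqres_midpoint_le m N A y x1 x2). fold xm in Hsm. lra. }
  assert (Hbd := optimal_on_boundary p m N A y eta xm Hp Heta Hrank Hbelow Hoptm).
  assert (Hlt := fpow_midpoint_lt p N x1 x2 j Hp Hj Hne). fold xm in Hlt. lra.
Qed.

Lemma invertible_tmatvec_eq0 n M c : invertible n M ->
  (forall k, (k < n)%nat -> tmatvec n M c k = 0) -> forall i, (i < n)%nat -> c i = 0.
Proof.
  intros [B [HMB _]] Hc j Hj. rewrite <- (rsum_kronecker n c j Hj).
  rewrite (rsum_ext n _ (fun i => rsum n (fun k => c i * (M i k * B k j))))
    by (intros i Hi; rewrite rsum_scal, HMB; auto).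
  rewrite rsum_exchange, <- (rsum_0 n). apply rsum_ext. intros k Hk.
  rewrite (rsum_ext n _ (fun i => B k j * (M i k * c i))) by (intros; ring).
  rewrite rsum_scal. unfold tmatvec in Hc. rewrite Hc by exact Hk. ring.
Qed.

Lemma full_row_rank_of_submatrices_invertible m N A : (m <= N)%nat ->
  all_square_submatrices_invertible m N A -> full_row_rank m N A.
Proof.
  intros HmN HA c Hc. apply (invertible_tmatvec_eq0 m (fun i k => A i k)).
  - apply (HA (fun k => k)); intros; lia.
  - intros k Hk. apply Hc. lia.
Qed.

Lemma filter_seq_nth_increasing (P : nat -> bool) n a k l :
  (k < l)%nat -> (l < length (filter P (seq a n)))%nat ->
  (nth k (filter P (seq a n)) O < nth l (filter P (seq a n)) O)%nat.
Proof.
  revert a k l. induction n as [|n IH]; intros a k l Hkl Hl; simpl in *; [lia|].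
  destruct (P a); [|apply IH; assumption].
  simpl in Hl. destruct k as [|k], l as [|l]; try lia; simpl; [|apply IH; lia].
  assert (Hin : In (nth l (filter P (seq (S a) n)) O) (filter P (seq (S a) n)))
    by (apply nth_In; lia).
  apply filter_In in Hin as [Hin _]. apply in_seq in Hin. lia.
Qed.

Lemma zero_coords_increasing N x m : (m <= N - supp_card N x)%nat ->
  exists s : nat -> nat,
    (forall k l, (k < l)%nat -> (l < m)%nat -> (s k < s l)%nat) /\
    (forall k, (k < m)%nat -> (s k < N)%nat /\ x (s k) = 0).
Proof.
  intros Hm.
  set (iszero := fun i => if Req_dec_T (x i) 0 then true else false).
  set (Z := filter iszero (seq 0 N)).
  assert (HZ : (m <= length Z)%nat).
  { assert (H := filter_length (fun i => if Req_dec_T (x i) 0 then false else true) (seq 0 N)).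
    rewrite length_seq in H. unfold supp_card in Hm.
    replace (filter (fun i => negb _) (seq 0 N)) with Z in H; [lia|].
    apply filter_ext. intros i. unfold iszero. destruct (Req_dec_T (x i) 0); reflexivity. }
  exists (fun k => nth k Z O). split.
  - intros k l Hkl Hl. apply filter_seq_nth_increasing; [exact Hkl | fold Z; lia].
  - intros k Hk. assert (Hin : In (nth k Z O) Z) by (apply nth_In; lia).
    apply filter_In in Hin as [Hin Hzero]. apply in_seq in Hin. split; [lia|].
    unfold iszero in Hzero. destruct (Req_dec_T (x (nth k Z O)) 0); [assumption | discriminate].
Qed.

Lemma optimal_support_card p m N A y eta xs : 1 < p -> 0 < eta -> (m <= N)%nat ->
  all_square_submatrices_invertible m N A -> below_min_norm p m N A y eta ->
  optimal p m N A y eta xs -> (N - m + 1 <= supp_card N xs)%nat.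
Proof.
  intros Hp Heta HmN HA Hbelow Hopt.
  assert (Hrank := full_row_rank_of_submatrices_invertible m N A HmN HA).
  destruct (optimal_kkt_multiplier p m N A y eta xs Hp Heta Hrank Hbelow Hopt) as [mu [_ Hkkt]].
  apply Nat.nlt_ge. intros Hsupp.
  destruct (zero_coords_increasing N xs m ltac:(lia)) as [s [Hs_incr Hs_zero]].
  destruct (optimal_resid_neq0 p m N A y eta xs Hopt Hbelow) as [i [Hi Hri]].
  apply Hri. apply (invertible_tmatvec_eq0 m (fun i k => A i (s k))); [| |exact Hi].
  - apply HA; [exact Hs_incr | intros k Hk; apply Hs_zero, Hk].
  - intros k Hk. destruct (Hs_zero k Hk) as [HsN Hxs0].
    specialize (Hkkt (s k) HsN). unfold grad_fpow in Hkkt.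
    rewrite Hxs0, sgn_0 in Hkkt. unfold tmatvec in Hkkt |- *. lra.
Qed.

Theorem proposition3p2 (p : R) (m N : nat) (A : nat -> nat -> R) (y : nat -> R) (eta : R) :
  1 < p ->
  (* (i) *)
  ((full_row_rank m N A -> 0 < eta -> below_min_norm p m N A y eta ->
    exists xs : nat -> R,
      optimal p m N A y eta xs /\
      (forall z, optimal p m N A y eta z -> forall i, (i < N)%nat -> z i = xs i) /\
      (exists mu : R,
         kkt p m N A y eta xs mu /\
         (forall mu', kkt p m N A y eta xs mu' -> mu' = mu) /\
         0 < mu) /\
      pnorm p N xs = eta)
  /\
  (* (ii) *)
   ((m <= N)%nat -> all_square_submatrices_invertible m N A ->
    (exists i, (i < m)%nat /\ y i <> 0) ->
    0 < eta -> below_min_norm p m N A y eta ->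
    forall xs, optimal p m N A y eta xs ->
      (N - m + 1 <= supp_card N xs)%nat)).
Proof.
  intros Hp. assert (Hp0 : 0 < p) by lra. split.
  - intros Hrank Heta Hbelow.
    destruct (optimal_exists p m N A y eta Hp Heta) as [xs Hopt].
    assert (Hbd := optimal_on_boundary p m N A y eta xs Hp Heta Hrank Hbelow Hopt).
    destruct (optimal_kkt_multiplier p m N A y eta xs Hp Heta Hrank Hbelow Hopt)
      as [mu [Hmu Hgrad]].
    assert (Hkkt : kkt p m N A y eta xs mu).
    { split; [exact Hgrad|]. rewrite Hbd. repeat split; lra. }
    exists xs. split; [exact Hopt|]. split.
    { intros z Hz i Hi. apply (optimal_unique p m N A y eta); assumption. }
    split; [|apply pnorm_eq_of_fpow_eq; assumption].
    exists mu. split; [exact Hkkt|]. split; [|exact Hmu].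
    intros mu' Hkkt'. apply (kkt_multiplier_unique p m N A y eta xs); try assumption.
    apply (fpow_gt0_support p). rewrite Hbd. apply exp_pos.
  - intros HmN HA _ Heta Hbelow xs Hopt.
    apply (optimal_support_card p m N A y eta); assumption.
Qed.
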